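(* Let $(M,d)$ be a metric space with at least two points, let $W$ be a linear space and let $V\neq\{0\}$ be a $W$-spreading space. For every non-injective non-constant function $f\in\mathrm{Lip}(M,V)$, there exists a closed infinite dimensional linear subspace $X$ of $\mathrm{Lip}(M,V)$ such that: (i) $f\in X$ and every function in $X$ is non-injective; (ii) there exists an infinite dimensional linear subspace $Z$ of $X$ all of whose nonzero elements are non-constant functions, such that $Z\cap\mathrm{span}\{f\}=\{0\}$ and $\lambda f+g\in X$ (hence $\lambda f+g$ is non-injective) for every $\lambda\in\mathbb{K}$ and every $g\in Z$.
   Context: A $W$-spreading space is a linear subspace $V$ of the space $W^{\mathbb{N}}$ of $W$-valued sequences (coordinatewise operations) endowed with a complete norm $\|\cdot\|_V$ such that: whenever $(a_j)_{j=1}^\infty\in V$ and $\mathbb{N}_0=\{j_1<j_2<\cdots\}$ is an infinite subset of $\mathbb{N}$, the sequence $(b_k)_k$ with $b_k=a_i$ if $k=j_i$ and $b_k=0$ if $k\notin\mathbb{N}_0$ belongs to $V$ and $\|(b_k)_k\|_V\le\|(a_j)_j\|_V$. $\mathrm{Lip}(M,V)$ is the Banach space of bounded Lipschitz functions $f\colon M\to V$ with norm $\|f\|_{\mathrm{Lip}}=\max\{\|f\|_d,\|f\|_\infty\}$, where $\|f\|_d=\sup\{\|f(x)-f(y)\|_V/d(x,y): x\ne y\}$ and $\|f\|_\infty=\sup_{x}\|f(x)\|_V$. *)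

From mathcomp Require Import all_boot all_algebra.
From mathcomp Require Import boolp classical_sets reals.
From mathcomp Require Import complex.

Set Implicit Arguments.
Unset Strict Implicit.
Unset Printing Implicit Defensive.

Import GRing.Theory Num.Theory.
Local Open Scope ring_scope.

Section Defs.
(* R : the reals (values of distances and norms);
   K : the scalar field (R or C), with modulus absK : K -> R;
   W : a linear space over K; sequences in W are maps nat -> W
   (the paper's index set N = {1,2,...} is re-indexed from 0). *)
Variables (R : realType) (K : fieldType) (absK : K -> R) (W : lmodType K).

Definition seq0 : nat -> W := fun _ => 0.
Definition seqadd (a b : nat -> W) : nat -> W := fun k => a k + b k.
Definition seqscale (c : K) (a : nat -> W) : nat -> W := fun k => c *: a k.
Definition seqsub (a b : nat -> W) : nat -> W := fun k => a k - b k.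

Definition seq_linsub (V : set (nat -> W)) : Prop :=
  [/\ V seq0,
      (forall a b, V a -> V b -> V (seqadd a b)) &
      (forall c a, V a -> V (seqscale c a))].

Definition is_norm_on (V : set (nat -> W)) (nV : (nat -> W) -> R) : Prop :=
  [/\ nV seq0 = 0,
      (forall a, V a -> 0 <= nV a),
      (forall a, V a -> nV a = 0 -> a = seq0),
      (forall c a, V a -> nV (seqscale c a) = absK c * nV a) &
      (forall a b, V a -> V b -> nV (seqadd a b) <= nV a + nV b)].

Definition complete_on (V : set (nat -> W)) (nV : (nat -> W) -> R) : Prop :=
  forall u : nat -> (nat -> W), (forall n, V (u n)) ->
    (forall e : R, 0 < e -> exists N, forall m n, (N <= m)%N -> (N <= n)%N ->
        nV (seqsub (u m) (u n)) < e) ->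
    exists2 a, V a &
      forall e : R, 0 < e -> exists N, forall n, (N <= n)%N ->
        nV (seqsub (u n) a) < e.

(* b is the spreading of a along the infinite set N0 = {j 0 < j 1 < ...}:
   b (j i) = a i and b k = 0 for k outside N0. *)
Definition spreading_of (j : nat -> nat) (a b : nat -> W) : Prop :=
  (forall i, b (j i) = a i) /\ (forall k, ~ (exists i, j i = k) -> b k = 0).

Definition spreading_space (V : set (nat -> W)) (nV : (nat -> W) -> R) : Prop :=
  [/\ seq_linsub V, is_norm_on V nV, complete_on V nV &
      forall (a : nat -> W) (j : nat -> nat) (b : nat -> W),
        V a -> (forall i, (j i < j i.+1)%N) -> spreading_of j a b ->
        V b /\ nV b <= nV a].

Variable M : Type.

Definition is_metric (d : M -> M -> R) : Prop :=
  [/\ (forall x y, 0 <= d x y),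
      (forall x y, d x y = 0 <-> x = y),
      (forall x y, d x y = d y x) &
      (forall x y z, d x z <= d x y + d y z)].

Definition fzero : M -> nat -> W := fun _ _ => 0.
Definition fadd (f g : M -> nat -> W) : M -> nat -> W := fun x k => f x k + g x k.
Definition fscale (c : K) (f : M -> nat -> W) : M -> nat -> W :=
  fun x k => c *: f x k.
Definition fsub (f g : M -> nat -> W) : M -> nat -> W := fun x k => f x k - g x k.

Variables (d : M -> M -> R) (V : set (nat -> W)) (nV : (nat -> W) -> R).

Definition Lip : set (M -> nat -> W) :=
  [set f | (forall x, V (f x)) /\
           (exists C : R, forall x, nV (f x) <= C) /\
           (exists L : R, forall x y, nV (seqsub (f x) (f y)) <= L * d x y)].

(* ||f||_Lip = max(||f||_d, ||f||_oo) <= e, written out *)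
Definition lipnorm_le (f : M -> nat -> W) (e : R) : Prop :=
  (forall x, nV (f x) <= e) /\
  (forall x y, x <> y -> nV (seqsub (f x) (f y)) / d x y <= e).

Definition fun_linsub (X : set (M -> nat -> W)) : Prop :=
  [/\ X fzero,
      (forall f g, X f -> X g -> X (fadd f g)) &
      (forall c f, X f -> X (fscale c f))].

Definition lip_closed (X : set (M -> nat -> W)) : Prop :=
  forall f, Lip f ->
    (forall e : R, 0 < e -> exists2 g, X g & lipnorm_le (fsub f g) e) -> X f.

Definition infinite_dim (X : set (M -> nat -> W)) : Prop :=
  forall n : nat, exists v : nat -> (M -> nat -> W),
    (forall i, (i < n)%N -> X (v i)) /\
    (forall c : nat -> K,
        (fun x k => \sum_(i < n) c i *: v i x k) = fzero ->
        forall i, (i < n)%N -> c i = 0).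

Definition non_injective (f : M -> nat -> W) : Prop :=
  exists x y, x <> y /\ f x = f y.

Definition non_constant (f : M -> nat -> W) : Prop :=
  exists x y, f x <> f y.

End Defs.

Definition prop4p8_for (R : realType) (K : fieldType) (absK : K -> R) : Prop :=
  forall (W : lmodType K) (M : Type) (d : M -> M -> R)
         (V : set (nat -> W)) (nV : (nat -> W) -> R),
    is_metric d ->
    (exists x y : M, x <> y) ->
    spreading_space absK V nV ->
    (exists a, V a /\ a <> @seq0 _ W) ->
    forall f : M -> nat -> W,
      Lip d V nV f -> non_injective f -> non_constant f ->
      exists X : set (M -> nat -> W),
        [/\ ((forall g, X g -> Lip d V nV g) /\ fun_linsub X), lip_closed d V nV X, infinite_dim X,
            X f /\ (forall g, X g -> non_injective g) &
            exists Z : set (M -> nat -> W),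
              [/\ ((forall g, Z g -> X g) /\ fun_linsub Z), infinite_dim Z,
                  (forall g, Z g -> g <> @fzero _ W M -> non_constant g),
                  (forall g, Z g -> (exists c : K, g = fscale c f) -> g = @fzero _ W M) &
                  (forall (c : K) g, Z g -> X (fadd (fscale c f) g))]].

From mathcomp Require Import all_boot all_algebra.
From mathcomp Require Import boolp classical_sets reals.
From mathcomp Require Import complex.
From mathcomp Require Import all_order zify lra.
Import Order.TTheory GRing.Theory Num.Theory.
Local Open Scope classical_set_scope.
Local Open Scope ring_scope.
Set Implicit Arguments.
Unset Strict Implicit.
Unset Printing Implicit Defensive.

(* Pick x0 <> y0 with f x0 = f y0 and take X = {g in Lip(M,V) | g x0 = g y0}:
   it is a linear subspace, and it is closed because the Lipschitz part of the
   norm controls ||g x0 - g y0|| / d(x0, y0).  For Z take the span of the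
   functions x |-> S^(n+1) (f x), where S is the right shift on sequences; the
   spreading property makes them bounded Lipschitz, and they still identify x0
   and y0.  Reading a combination of shifts at the first nonzero coordinate of a
   nonzero sequence recovers its coefficients one at a time; this gives linear
   independence, non-constancy, and Z meeting the line through f only at 0. *)

Section Shifts.
Variables (K : fieldType) (W : lmodType K).

Definition seqshift (m : nat) (a : nat -> W) : nat -> W :=
  fun k => if (m <= k)%N then a (k - m)%N else 0.

Definition shiftsum (N : nat) (c : nat -> K) (a : nat -> W) : nat -> W :=
  fun k => \sum_(n < N) c n *: seqshift n.+1 a k.

Lemma first_nonzero (a : nat -> W) : a <> @seq0 _ W ->
  exists i0, a i0 != 0 /\ forall i, (i < i0)%N -> a i = 0.
Proof.
move=> a_neq0; have ex_nz : exists n, a n != 0.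
  apply/not_existsP => a0; apply: a_neq0; apply/funext => n.
  by apply/eqP; rewrite -[_ == _]negbK; apply/negP.
case: (ex_minnP ex_nz) => i0 ai0 i0_min.
exists i0; split => // i lt_i_i0; apply/eqP.
by apply: contraTT lt_i_i0 => /i0_min; rewrite leqNgt.
Qed.

Lemma seqsub_eq0 (a b : nat -> W) : seqsub a b = @seq0 _ W -> a = b.
Proof.
move=> ab0; apply/funext => k; apply/eqP; rewrite -subr_eq0; apply/eqP.
exact: (congr1 (fun s => s k) ab0).
Qed.

Lemma shiftsumB N c (a b : nat -> W) :
  seqsub (shiftsum N c a) (shiftsum N c b) = shiftsum N c (seqsub a b).
Proof.
apply/funext => k; rewrite /shiftsum /seqsub -sumrB; apply: eq_bigr => n _.
by rewrite -scalerBr /seqshift; case: ifP; rewrite ?subr0.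
Qed.

Lemma shiftsum_below N c (a : nat -> W) i0 :
  (forall i, (i < i0)%N -> a i = 0) -> shiftsum N c a i0 = 0.
Proof.
move=> a_below; rewrite /shiftsum big1 // => n _; rewrite /seqshift.
by case: ifP => [le|_]; rewrite ?a_below ?scaler0 //; lia.
Qed.

(* The coordinate i0 + n + 1 of the sum only sees [c n] and [c m] for [m < n]. *)
Lemma shiftsum_eq0_coef N c (a : nat -> W) i0 :
  a i0 != 0 -> (forall i, (i < i0)%N -> a i = 0) ->
  shiftsum N c a = @seq0 _ W -> forall n, (n < N)%N -> c n = 0.
Proof.
move=> ai0 a_below sum0; elim/ltn_ind => n IHn lt_nN.
have := congr1 (fun s => s (i0 + n.+1)%N) sum0.
rewrite /shiftsum /seq0 (bigD1 (Ordinal lt_nN)) //= big1 ?addr0.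
  rewrite /seqshift leq_addl addnK => /eqP.
  by rewrite scaler_eq0 (negbTE ai0) orbF => /eqP.
move=> m neq_mn; case: (ltngtP m n) => [lt_mn|lt_nm|eq_mn].
- by rewrite IHn ?scale0r.
- rewrite /seqshift; case: ifP => [le|_]; rewrite ?a_below ?scaler0 //; lia.
- by move: neq_mn; rewrite (_ : m = Ordinal lt_nN) ?eqxx //; apply: val_inj.
Qed.

Lemma shiftsum_eq0 N c (a : nat -> W) : a <> @seq0 _ W ->
  shiftsum N c a = @seq0 _ W -> forall n, (n < N)%N -> c n = 0.
Proof. by move=> /first_nonzero[i0 [ai0 a_below]]; apply: shiftsum_eq0_coef ai0 a_below. Qed.

Lemma shiftsum_widen N1 N c (a : nat -> W) : (N1 <= N)%N ->
  shiftsum N (fun n => if (n < N1)%N then c n else 0) a = shiftsum N1 c a.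
Proof.
move=> le_N1N; apply/funext => k; rewrite /shiftsum.
rewrite (big_ord_widen N (fun n => c n *: seqshift n.+1 a k) le_N1N) [RHS]big_mkcond /=.
by apply: eq_bigr => n _; case: ifP; rewrite ?scale0r.
Qed.

Lemma shiftsumD N c c' (a : nat -> W) :
  seqadd (shiftsum N c a) (shiftsum N c' a) = shiftsum N (fun n => c n + c' n) a.
Proof.
apply/funext => k; rewrite /seqadd /shiftsum -big_split.
by apply: eq_bigr => n _; rewrite scalerDl.
Qed.

Lemma shiftsumZ b N c (a : nat -> W) :
  seqscale b (shiftsum N c a) = shiftsum N (fun n => b * c n) a.
Proof.
apply/funext => k; rewrite /seqscale /shiftsum scaler_sumr.
by apply: eq_bigr => n _; rewrite scalerA.
Qed.

End Shifts.

Lemma infinite_dim_sub (K : fieldType) (W : lmodType K) (M : Type) (X Y : set (M -> nat -> W)) :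
  X `<=` Y -> infinite_dim X -> infinite_dim Y.
Proof.
move=> sXY dimX n; have [v [Xv v_free]] := dimX n.
by exists v; split=> // i lt_in; apply/sXY/Xv.
Qed.

Section ShiftSpan.
Variables (K : fieldType) (W : lmodType K) (M : Type) (f : M -> nat -> W).

Definition shiftspan : set (M -> nat -> W) :=
  [set g | exists N c, g = fun x => shiftsum N c (f x)].

Lemma shiftspan_linsub : fun_linsub shiftspan.
Proof.
split.
- exists 0%N, (fun=> 0); apply/funext => x; apply/funext => k.
  by rewrite /shiftsum big_ord0.
- move=> _ _ [N1 [c1 ->]] [N2 [c2 ->]].
  exists (N1 + N2)%N,
    (fun n => (if (n < N1)%N then c1 n else 0) + (if (n < N2)%N then c2 n else 0)).
  apply/funext => x; rewrite -shiftsumD shiftsum_widen ?leq_addr // shiftsum_widen ?leq_addl //.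
- by move=> b _ [N [c ->]]; exists N, (fun n => b * c n); apply/funext => x; rewrite -shiftsumZ.
Qed.

Lemma shiftspan_agree x0 y0 g : f x0 = f y0 -> shiftspan g -> g x0 = g y0.
Proof. by move=> fx [N [c ->]]; rewrite fx. Qed.

Lemma shiftspan_infinite_dim r : f r <> @seq0 _ W -> infinite_dim shiftspan.
Proof.
move=> fr_neq0 n; exists (fun i x => seqshift i.+1 (f x)); split.
  move=> i _; exists i.+1, (fun m => (m == i)%:R).
  apply/funext => x; apply/funext => k; rewrite /shiftsum big_ord_recr /= big1.
    by rewrite eqxx scale1r add0r.
  move=> m _; rewrite (_ : (nat_of_ord m == i) = false) ?scale0r //.
  by apply/negbTE; rewrite neq_ltn ltn_ord.
move=> c comb0; apply: (shiftsum_eq0 fr_neq0).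
by apply/funext => k; apply: (congr1 (fun g => g r k) comb0).
Qed.

Lemma shiftspan_non_constant g :
  non_constant f -> shiftspan g -> g <> @fzero _ W M -> non_constant g.
Proof.
move=> [p [q fpq]] [N [c ->]] g_neq0; exists p, q => gpq; apply: g_neq0.
have fpq_neq0 : seqsub (f p) (f q) <> @seq0 _ W by move/seqsub_eq0.
have sum0 : shiftsum N c (seqsub (f p) (f q)) = @seq0 _ W.
  by rewrite -shiftsumB gpq; apply/funext => k; rewrite /seqsub subrr.
have c0 := shiftsum_eq0 fpq_neq0 sum0.
by apply/funext => x; apply/funext => k; rewrite /shiftsum big1 // => n _; rewrite c0 ?scale0r.
Qed.

Lemma shiftspan_line g r : f r <> @seq0 _ W -> shiftspan g ->
  (exists c : K, g = fscale c f) -> g = @fzero _ W M.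
Proof.
move=> /first_nonzero[i0 [fri0 fr_below]] [N [c' g_def]] [c g_cf].
have := congr1 (fun h => h r i0) g_cf; rewrite {1}g_def /= shiftsum_below // /fscale.
move/esym/eqP; rewrite scaler_eq0 (negbTE fri0) orbF => /eqP c0.
by rewrite g_cf c0; apply/funext => x; apply/funext => k; rewrite /fscale scale0r.
Qed.

End ShiftSpan.

Section SpreadingSpace.
Variables (R : realType) (K : fieldType) (absK : K -> R) (W : lmodType K).
Variables (V : set (nat -> W)) (nV : (nat -> W) -> R).
Hypothesis spV : spreading_space absK V nV.

Lemma spreading_subV a b : V a -> V b -> V (seqsub a b).
Proof.
have [[_ VD VZ] _ _ _] := spV => Va Vb.
have -> : seqsub a b = seqadd a (seqscale (-1) b).
  by apply/funext => k; rewrite /seqsub /seqadd /seqscale scaleN1r.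
by apply: VD => //; apply: VZ.
Qed.

Lemma spreading_seqshift m a : V a -> V (seqshift m a) /\ nV (seqshift m a) <= nV a.
Proof.
have [_ _ _ spread] := spV => Va; apply: (spread a (addn^~ m)) => //.
split=> [i|k not_img]; first by rewrite /seqshift leq_addl addnK.
rewrite /seqshift; case: ifP => // le_mk.
by case: not_img; exists (k - m)%N; lia.
Qed.

Lemma spreading_shiftsum N c a : V a ->
  V (shiftsum N c a) /\ nV (shiftsum N c a) <= (\sum_(n < N) `|absK (c n)|) * nV a.
Proof.
have [[V0 VD VZ] [nV0 nV_ge0 _ nVZ nVD] _ _] := spV => Va.
elim: N => [|N [VS nVS]].
  have -> : shiftsum 0 c a = @seq0 _ W by apply/funext => k; rewrite /shiftsum big_ord0.
  by rewrite nV0 big_ord0 mul0r.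
have -> : shiftsum N.+1 c a = seqadd (shiftsum N c a) (seqscale (c N) (seqshift N.+1 a)).
  by apply/funext => k; rewrite /shiftsum big_ord_recr.
have [Vsh nVsh] := spreading_seqshift N.+1 Va.
split; first by apply: VD => //; apply: VZ.
apply: le_trans (nVD _ _ VS (VZ (c N) _ Vsh)) _.
rewrite nVZ // big_ord_recr /= mulrDl lerD //.
have := nV_ge0 _ Vsh; have := ler_norm (absK (c N)); have := normr_ge0 (absK (c N)).
nra.
Qed.

Variables (M : Type) (d : M -> M -> R).

Lemma LipD f g : Lip d V nV f -> Lip d V nV g -> Lip d V nV (fadd f g).
Proof.
have [[_ VD _] [_ _ _ _ nVD] _ _] := spV.
move=> [Vf [[Cf nVf] [Lf lipf]]] [Vg [[Cg nVg] [Lg lipg]]].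
split; first by move=> x; apply: VD.
split; first by exists (Cf + Cg) => x; apply: le_trans (nVD _ _ (Vf x) (Vg x)) _; apply: lerD.
exists (Lf + Lg) => x y.
have -> : seqsub (fadd f g x) (fadd f g y) = seqadd (seqsub (f x) (f y)) (seqsub (g x) (g y)).
  by apply/funext => k; rewrite /seqsub /seqadd /fadd opprD addrACA.
apply: le_trans (nVD _ _ (spreading_subV (Vf x) (Vf y)) (spreading_subV (Vg x) (Vg y))) _.
by rewrite mulrDl; apply: lerD.
Qed.

Lemma Lip_shiftsum N c f : Lip d V nV f -> Lip d V nV (fun x => shiftsum N c (f x)).
Proof.
move=> [Vf [[C nVf] [L lipf]]].
set B := \sum_(n < N) `|absK (c n)|.
have B_ge0 : 0 <= B by apply: sumr_ge0 => n _; apply: normr_ge0.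
split; first by move=> x; case: (spreading_shiftsum N c (Vf x)).
split.
  exists (B * C) => x; have [_ nVS] := spreading_shiftsum N c (Vf x).
  by apply: le_trans nVS _; apply: ler_wpM2l.
exists (B * L) => x y; rewrite shiftsumB.
have [_ nVS] := spreading_shiftsum N c (spreading_subV (Vf x) (Vf y)).
by apply: le_trans nVS _; rewrite -mulrA; apply: ler_wpM2l.
Qed.

Lemma LipZ a f : Lip d V nV f -> Lip d V nV (fscale a f).
Proof.
have [[_ _ VZ] [_ nV_ge0 _ nVZ _] _ _] := spV.
move=> [Vf [[C nVf] [L lipf]]].
have a_ge0 := normr_ge0 (absK a); have le_a := ler_norm (absK a).
split; first by move=> x; apply: VZ.
split.
  exists (`|absK a| * C) => x; rewrite [fscale a f x]/= -/(seqscale a (f x)) nVZ //.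
  by have := nVf x; have := nV_ge0 _ (Vf x); nra.
exists (`|absK a| * L) => x y.
have -> : seqsub (fscale a f x) (fscale a f y) = seqscale a (seqsub (f x) (f y)).
  by apply/funext => k; rewrite /seqsub /seqscale /fscale scalerBr.
have V_xy := spreading_subV (Vf x) (Vf y).
by rewrite nVZ // -mulrA; have := lipf x y; have := nV_ge0 _ V_xy; nra.
Qed.

Lemma Lip0 : Lip d V nV (@fzero _ W M).
Proof.
have [[V0 _ _] [nV0 _ _ _ _] _ _] := spV.
split=> //; split; first by exists 0 => x; rewrite -/(seq0 W) nV0.
exists 0 => x y; rewrite mul0r (_ : seqsub _ _ = @seq0 _ W) ?nV0 //.
by apply/funext => k; rewrite /seqsub subrr.
Qed.

Definition agree_at (x0 y0 : M) : set (M -> nat -> W) :=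
  [set g | Lip d V nV g /\ g x0 = g y0].

Lemma agree_at_linsub x0 y0 : fun_linsub (agree_at x0 y0).
Proof.
split; first by split; [apply: Lip0 |].
- by move=> f g [Lf fx] [Lg gx]; split; [apply: LipD | rewrite /fadd fx gx].
- by move=> a f [Lf fx]; split; [apply: LipZ | rewrite /fscale fx].
Qed.

Lemma agree_at_closed x0 y0 : is_metric d -> x0 <> y0 -> lip_closed d V nV (agree_at x0 y0).
Proof.
have [_ [_ nV_ge0 nV_eq0 _ _] _ _] := spV.
move=> [d_ge0 d_eq0 _ _] neq_xy g Lg approx; split => //.
set u := seqsub (g x0) (g y0).
have Vu : V u by case: Lg => Vg _; apply: spreading_subV.
have d_gt0 : 0 < d x0 y0.
  by rewrite lt_neqAle d_ge0 andbT; apply/eqP => /esym /d_eq0.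
have nVu0 : nV u = 0.
  apply/eqP; rewrite eq_le nV_ge0 // andbT leNgt; apply/negP => nVu_gt0.
  have ratio_gt0 : 0 < nV u / d x0 y0 by apply: divr_gt0.
  have [h [_ hx] [_ lip_gh]] := approx (nV u / d x0 y0 / 2) ltac:(lra).
  have := lip_gh x0 y0 neq_xy.
  have -> : seqsub (fsub g h x0) (fsub g h y0) = u.
    by apply/funext => k; rewrite /seqsub /fsub /u hx opprB addrA subrK.
  lra.
by apply/seqsub_eq0/nV_eq0.
Qed.

Lemma shiftspan_sub_agree_at f x0 y0 : Lip d V nV f -> f x0 = f y0 ->
  shiftspan f `<=` agree_at x0 y0.
Proof.
move=> Lf fx g Sg; split; last exact: shiftspan_agree Sg.
by case: Sg => N [c ->]; apply: Lip_shiftsum.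
Qed.

End SpreadingSpace.

Lemma prop4p8_for_all (R : realType) (K : fieldType) (absK : K -> R) : prop4p8_for absK.
Proof.
move=> W M d V nV d_metric _ spV _ f Lf [x0 [y0 [neq_xy fx]]] f_nonconst.
have [r fr_neq0] : exists r, f r <> @seq0 _ W.
  have [p [q fpq]] := f_nonconst; case: (pselect (f p = @seq0 _ W)); last by exists p.
  by move=> fp; exists q => fq; apply: fpq; rewrite fp fq.
have sZX := shiftspan_sub_agree_at spV Lf fx.
have [X0 XD XZ] := agree_at_linsub spV d x0 y0.
exists (agree_at V nV d x0 y0); split.
- by split=> [g []|].
- exact (agree_at_closed spV d_metric neq_xy).
- exact: infinite_dim_sub sZX (shiftspan_infinite_dim fr_neq0).
- by split=> [|g [_ gx]]; last by exists x0, y0.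
exists (shiftspan f); split.
- by split=> //; apply: shiftspan_linsub.
- exact: shiftspan_infinite_dim fr_neq0.
- by move=> g; apply: shiftspan_non_constant.
- by move=> g; apply: shiftspan_line fr_neq0.
- by move=> c g Zg; apply: XD; [apply: XZ | apply: sZX].
Qed.

Theorem proposition4p8 :
  forall R : realType,
    @prop4p8_for R R (fun c : R => `|c|) /\
    @prop4p8_for R (complex R) (@Normc.normc R).
Proof. by move=> R; split; apply: prop4p8_for_all. Qed.
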